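(* Let $K>1$, $M\ge1$, and define $\tilde{\bm{\psi}}^M:\mathbb{R}^{K+M}\to\mathbb{R}^{K+M}$ by $$\tilde{\psi}^M_y(\bm{u})=\frac{\exp(u_y)}{\sum_{y'=1}^K\exp(u_{y'})}\ \ (1\le y\le K),\qquad \tilde{\psi}^M_y(\bm{u})=\frac{\exp(u_y)}{\sum_{y'=1}^{K}\exp(u_{y'})+\exp(u_y)-\max_{y'\in\{1,\dots,K\}}\exp(u_{y'})}\ \ (K+1\le y\le K+M).$$ Then for every $\bm{u}\in\mathbb{R}^{K+M}$: (i) $\tilde{\bm{\psi}}^M(\bm{u})\in\Delta^K\times[0,1]^M$; (ii) $\mathop{\rm argmax}_{y\in\{1,\dots,K+M\}}\tilde{\psi}^M_y(\bm{u})=\mathop{\rm argmax}_{y\in\{1,\dots,K+M\}}u_y$.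
   Context: $\Delta^K$ is the probability simplex in $\mathbb{R}^K$; $\Delta^K\times[0,1]^M$ means the first $K$ coordinates lie in $\Delta^K$ and each of the last $M$ lies in $[0,1]$. This is the multi-expert version of the asymmetric softmax, with one extra coordinate per expert. *)

From HB Require Import structures.
From mathcomp Require Import all_boot all_order all_algebra.
From mathcomp Require Import all_classical all_reals all_analysis.
Set Implicit Arguments. Unset Strict Implicit. Unset Printing Implicit Defensive.
Import Order.TTheory GRing.Theory Num.Theory.
Local Open Scope ring_scope.

Section Psi.
Variables (R : realType) (K M : nat).

Definition sumexpK (u : 'I_(K + M) -> R) : R :=
  \sum_(i < K) expR (u (lshift M i)).

(* max_{y' in 1..K} exp(u_{y'}); the fold starts at 0, which is harmless
   since every exp value is > 0 and K > 1 (nonempty range). *)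
Definition maxexpK (u : 'I_(K + M) -> R) : R :=
  \big[Num.max/0]_(i < K) expR (u (lshift M i)).

(* The multi-expert asymmetric softmax psi~^M. Indices 0..K-1 are the K
   classes, indices K..K+M-1 the M extra coordinates. *)
Definition psiM (u : 'I_(K + M) -> R) (y : 'I_(K + M)) : R :=
  match fintype.split y with
  | inl _ => expR (u y) / sumexpK u
  | inr _ => expR (u y) / (sumexpK u + expR (u y) - maxexpK u)
  end.

Definition in_simplex_box (p : 'I_(K + M) -> R) : Prop :=
  (forall i : 'I_K, 0 <= p (lshift M i)) /\
  \sum_(i < K) p (lshift M i) = 1 /\
  (forall j : 'I_M, 0 <= p (rshift K j) <= 1).

End Psi.

Definition argmax (R : realType) (T : finType) (f : T -> R) : {set T} :=
  [set y | [forall y', f y' <= f y]].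

(** Let [E y = exp u_y], let [S] and [m] be the sum and the maximum of [E]
    over the [K] classes, and [a = S - m], which is positive because [K > 1].
    Every coordinate is at most [e^(u_y) / (a + e^(u_y))], a strictly increasing
    function of [u_y]: a class coordinate is [E y / (a + m)] with [E y <= m],
    and an extra coordinate is exactly this value.  Equality holds as soon as
    [u_y] reaches the best class score, which pins the maximizers of the
    softmax to those of [u]. *)

From mathcomp Require Import all_boot all_order all_algebra.
From mathcomp Require Import all_classical all_reals all_analysis.
Import Order.TTheory GRing.Theory Num.Theory.
Local Open Scope ring_scope.

Section ArgmaxMajorant.
Context {R : realType} {T : finType} {p u : T -> R} {h : R -> R} (y0 : T).
Hypothesis h_mono : {mono h : x y / x <= y}.
Hypothesis p_le : forall y, p y <= h (u y).
Hypothesis p_eq : forall y, u y0 <= u y -> p y = h (u y).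

Lemma argmax_majorant : argmax p = argmax u.
Proof.
apply/setP => y; rewrite !inE; apply/forallP/forallP => max_y y'.
- have y0_le_y : u y0 <= u y.
    by rewrite -h_mono -p_eq // (le_trans (max_y y0)).
  have [y0_le_y'|/ltW y'_le_y0] := leP (u y0) (u y'); last exact: le_trans y'_le_y0 y0_le_y.
  by rewrite -h_mono -p_eq // -p_eq.
- by rewrite (p_eq _ (max_y y0)) (le_trans (p_le y')) // h_mono.
Qed.

End ArgmaxMajorant.

Lemma term_lt_sum {R : numDomainType} {I : finType} (F : I -> R) (i j : I) :
  i != j -> (forall k, 0 < F k) -> F i < \sum_k F k.
Proof.
move=> ij F_gt0; rewrite (bigD1 i) //= ltrDl (bigD1 j) /=; last by rewrite eq_sym.
by rewrite ltr_pwDl // sumr_ge0 // => k _; exact/ltW.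
Qed.

Lemma term_le_sum {R : numDomainType} {I : finType} (F : I -> R) (i : I) :
  (forall k, 0 <= F k) -> F i <= \sum_k F k.
Proof. by move=> F_ge0; rewrite (bigD1 i) //= lerDl sumr_ge0. Qed.

Definition shifted_logistic {R : realType} (a x : R) : R := expR x / (a + expR x).

Lemma shifted_logistic_mono {R : realType} (a : R) : 0 < a ->
  {mono shifted_logistic a : x y / x <= y}.
Proof.
move=> a_gt0 x y; rewrite /shifted_logistic -[x <= y]ler_expR.
have [ex_gt0 ey_gt0] := (expR_gt0 x, expR_gt0 y).
rewrite ler_pdivrMr ?addr_gt0 // mulrAC ler_pdivlMr ?addr_gt0 //.
by rewrite !mulrDr (mulrC (expR y) (expR x)) lerD2r ler_pM2r.
Qed.

Section Psi.
Context {R : realType} {K M : nat} (u : 'I_(K + M) -> R).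

Local Notation E i := (expR (u i)).
Local Notation S := (sumexpK u).
Local Notation m := (maxexpK u).

Lemma psiM_lshift (i : 'I_K) : psiM u (lshift M i) = E (lshift M i) / S.
Proof. by rewrite /psiM -[lshift M i]/(unsplit (inl i)) unsplitK. Qed.

Lemma psiM_rshift (j : 'I_M) :
  psiM u (rshift K j) = E (rshift K j) / (S + E (rshift K j) - m).
Proof. by rewrite /psiM -[rshift K j]/(unsplit (inr j)) unsplitK. Qed.

Lemma sumexpK_ge0 : 0 <= S.
Proof. by rewrite sumr_ge0 // => i _; exact/ltW/expR_gt0. Qed.

Lemma le_sumexpK (i : 'I_K) : E (lshift M i) <= S.
Proof. by apply: term_le_sum => k; exact/ltW/expR_gt0. Qed.

Lemma le_maxexpK (i : 'I_K) : E (lshift M i) <= m.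
Proof. exact: le_bigmax. Qed.

Lemma maxexpK_attained : (0 < K)%N -> exists i : 'I_K, m = E (lshift M i).
Proof.
move=> K_gt0; have [i _ max_i] := eq_bigmax (x := 0) (Ordinal K_gt0) xpredT
  (fun i => E (lshift M i)) isT (fun i _ => ltW (expR_gt0 _)).
by exists i; exact: max_i.
Qed.

Lemma maxexpK_le_sumexpK : m <= S.
Proof.
by apply: bigmax_le sumexpK_ge0 _ => i _; exact: le_sumexpK.
Qed.

Lemma maxexpK_lt_sumexpK : (1 < K)%N -> m < S.
Proof.
move=> K_gt1; have [i ->] := maxexpK_attained (ltnW K_gt1).
pose j : 'I_K := if val i == 0%N then Ordinal K_gt1 else Ordinal (ltnW K_gt1).
apply: (term_lt_sum _ i j) => [|k]; last exact: expR_gt0.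
by rewrite /j -val_eqE; case: ifP => /eqP i0 /=; [rewrite i0 | apply/eqP].
Qed.

Lemma in_simplex_box_psiM : (0 < K)%N -> in_simplex_box (psiM u).
Proof.
move=> K_gt0; have S_gt0 := lt_le_trans (expR_gt0 _) (le_sumexpK (Ordinal K_gt0)).
split; [|split].
- by move=> i; rewrite psiM_lshift divr_ge0 // ltW // expR_gt0.
- under eq_bigr do rewrite psiM_lshift.
  by rewrite -mulr_suml divff // gt_eqF.
- move=> j; have E_gt0 := expR_gt0 (u (rshift K j)).
  have gap_ge0 : 0 <= S - m by rewrite subr_ge0 maxexpK_le_sumexpK.
  have den_gt0 : 0 < S + E (rshift K j) - m by rewrite addrAC ltr_wpDl.
  rewrite psiM_rshift ler_pdivrMr // mul1r divr_ge0 ?(ltW E_gt0) ?(ltW den_gt0) //=.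
  by rewrite addrAC lerDr.
Qed.

Lemma psiM_le_shifted_logistic (y : 'I_(K + M)) :
  psiM u y <= shifted_logistic (S - m) (u y).
Proof.
rewrite /shifted_logistic; case: (split_ordP y) => [i|j] ->; last first.
  by rewrite psiM_rshift addrAC.
have E_gt0 := expR_gt0 (u (lshift M i)).
have S_gt0 := lt_le_trans E_gt0 (le_sumexpK i).
have den_gt0 : 0 < S - m + E (lshift M i).
  by rewrite ltr_wpDl // subr_ge0 maxexpK_le_sumexpK.
rewrite psiM_lshift ler_pM2l // lef_pV2 ?posrE //.
by rewrite -addrA gerDl addrC subr_le0 le_maxexpK.
Qed.

Lemma psiM_eq_shifted_logistic (y : 'I_(K + M)) :
  m <= E y -> psiM u y = shifted_logistic (S - m) (u y).
Proof.
rewrite /shifted_logistic; case: (split_ordP y) => [i|j] -> m_le; last first.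
  by rewrite psiM_rshift addrAC.
have E_eq_m : E (lshift M i) = m by apply/eqP; rewrite eq_le le_maxexpK.
by rewrite psiM_lshift E_eq_m subrK.
Qed.

End Psi.

Theorem proposition2 (R : realType) (K M : nat) (hK : (1 < K)%N) (hM : (1 <= M)%N)
  (u : 'I_(K + M) -> R) :
  in_simplex_box (psiM u) /\ argmax (psiM u) = argmax u.
Proof.
split; first exact: in_simplex_box_psiM u (ltnW hK).
have [i0 m_def] := maxexpK_attained u (ltnW hK).
apply: (argmax_majorant (lshift M i0) _ (psiM_le_shifted_logistic u)).
- by apply: shifted_logistic_mono; rewrite subr_gt0 maxexpK_lt_sumexpK.
- by move=> y y0_le_y; rewrite psiM_eq_shifted_logistic // m_def ler_expR.
Qed.
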